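(* Let $L$ be a frame and $f\in\overline{\mathrm{F}}(L)$. The following are equivalent: (1) for every $g\in\overline{\mathrm{F}}(L)$, $f\vee^{\overline{\mathrm{F}}(L)}g=\boldsymbol{+\infty}$ implies $g=\boldsymbol{+\infty}$; (2) $\big(\bigvee_{s\in\mathbb{Q}}f(\textsf{---},s)\big)^\ast=0$; (3) $\bigwedge_{r\in\mathbb{Q}}f(r,\textsf{---})=0$.
   Context: $\mathbb{Q}$ is the rationals. A sublocale of $L$ is a subset closed under arbitrary meets and such that $x\to s\in S$ for $x\in L$, $s\in S$; $\mathrm{coS}(L)$ is the frame of all sublocales ordered by reverse inclusion (bottom $0=L$, top $1=\{1\}$); all lattice operations and pseudocomplements $^\ast$ here are taken in $\mathrm{coS}(L)$. The frame $\mathfrak{L}(\overline{\mathbb{IR}})$ is presented by generators $(r,\textsf{---})$, $(\textsf{---},s)$ ($r,s\in\mathbb{Q}$) subject to (r1) $(r,\textsf{---})\wedge(\textsf{---},s)=0$ whenever $r\ge s$; (r3) $(r,\textsf{---})=\bigvee_{s>r}(s,\textsf{---})$; (r4) $(\textsf{---},s)=\bigvee_{r<s}(\textsf{---},r)$. $\overline{\mathrm{F}}(L)$ (arbitrary extended real functions on $L$) is the set of frame homomorphisms $f\colon\mathfrak{L}(\overline{\mathbb{IR}})\to\mathrm{coS}(L)$ with $f(r,\textsf{---})^\ast\le f(\textsf{---},s)$ and $f(\textsf{---},s)^\ast\le f(r,\textsf{---})$ for all $r<s$, ordered by $f\le g$ iff $f(r,\textsf{---})\le g(r,\textsf{---})$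 and $g(\textsf{---},s)\le f(\textsf{---},s)$ for all $r,s$; it is a complete lattice. $\boldsymbol{+\infty}$ is its top element, given by $\boldsymbol{+\infty}(r,\textsf{---})=1$ and $\boldsymbol{+\infty}(\textsf{---},s)=0$ for all $r,s$. *)

From mathcomp Require Import all_boot all_order all_algebra.
Import Order.TTheory GRing.Theory Num.Theory.

Set Implicit Arguments.
Unset Strict Implicit.
Unset Printing Implicit Defensive.

Record frame := Frame {
  fcarrier :> Type;
  fle : fcarrier -> fcarrier -> Prop;
  fle_refl : forall x, fle x x;
  fle_trans : forall x y z, fle x y -> fle y z -> fle x z;
  fle_antisym : forall x y, fle x y -> fle y x -> x = y;
  fsup : (fcarrier -> Prop) -> fcarrier;
  fsup_ub : forall (A : fcarrier -> Prop) x, A x -> fle x (fsup A);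
  fsup_least : forall (A : fcarrier -> Prop) y,
      (forall x, A x -> fle x y) -> fle (fsup A) y;
  fmeet : fcarrier -> fcarrier -> fcarrier;
  fmeet_l : forall x y, fle (fmeet x y) x;
  fmeet_r : forall x y, fle (fmeet x y) y;
  fmeet_glb : forall x y z, fle z x -> fle z y -> fle z (fmeet x y);
  fmeet_distr : forall x (A : fcarrier -> Prop),
      fmeet x (fsup A) = fsup (fun y => exists a, A a /\ y = fmeet x a)
}.

Section FrameOps.
Variable L : frame.

Definition ftop : L := fsup (fun _ => True).
Definition finf (A : L -> Prop) : L :=
  fsup (fun z => forall a, A a -> fle z a).
Definition fimp (x y : L) : L := fsup (fun z => fle (fmeet z x) y).

Definition is_sublocale (S : L -> Prop) : Prop :=
  (forall A : L -> Prop, (forall a, A a -> S a) -> S (finf A)) /\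
  (forall x s, S s -> S (fimp x s)).

(* The frame coS(L) of sublocales, ordered by REVERSE inclusion.       *)
(* Elements are represented by their underlying subsets L -> Prop      *)
(* (sublocale-hood is required where elements are introduced).         *)
Definition cle (S T : L -> Prop) : Prop := forall x, T x -> S x.
Definition ceq (S T : L -> Prop) : Prop := forall x, S x <-> T x.
Definition czero : L -> Prop := fun _ => True.
Definition cone : L -> Prop := fun x => x = ftop.

Definition cJoin (I : Type) (S : I -> L -> Prop) : L -> Prop :=
  fun x => forall i, S i x.
Definition cMeet (I : Type) (S : I -> L -> Prop) : L -> Prop :=
  fun x => forall U, is_sublocale U -> (forall i y, S i y -> U y) -> U x.
Definition cmeet2 (S T : L -> Prop) : L -> Prop :=
  cMeet (fun b : bool => if b then S else T).
Definition cpc (S : L -> Prop) : L -> Prop :=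
  fun x => forall T, is_sublocale T -> ceq (cmeet2 S T) czero -> T x.

End FrameOps.

(* Fbar(L): frame homomorphisms L(IRbar) -> coS(L), represented by     *)
(* their values on the generators (r,---) [fup r] and (---,s) [fdn s], *)
(* which must satisfy the defining relations (r1), (r3), (r4) in       *)
(* coS(L) (universal property of the presented frame), together with   *)
(* the pseudocomplement conditions defining Fbar(L).                   *)
Record Fbar (L : frame) := MkFbar {
  fup : rat -> L -> Prop;
  fdn : rat -> L -> Prop;
  fup_sub : forall r, is_sublocale (fup r);
  fdn_sub : forall s, is_sublocale (fdn s);
  fr1 : forall r s : rat, (s <= r)%R -> ceq (cmeet2 (fup r) (fdn s)) (@czero L);
  fr3 : forall r : rat,
      ceq (fup r) (cJoin (fun s : {s : rat | (r < s)%R} => fup (sval s)));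
  fr4 : forall s : rat,
      ceq (fdn s) (cJoin (fun r : {r : rat | (r < s)%R} => fdn (sval r)));
  fpc1 : forall r s : rat, (r < s)%R -> cle (cpc (fup r)) (fdn s);
  fpc2 : forall r s : rat, (r < s)%R -> cle (cpc (fdn s)) (fup r)
}.

Section FbarOps.
Variable L : frame.

Definition Fle (f g : Fbar L) : Prop :=
  (forall r, cle (fup f r) (fup g r)) /\ (forall s, cle (fdn g s) (fdn f s)).

(* equality of frame homomorphisms = agreement on generators *)
Definition Feq (f g : Fbar L) : Prop :=
  (forall r, ceq (fup f r) (fup g r)) /\ (forall s, ceq (fdn f s) (fdn g s)).

Definition Fis_join (f g h : Fbar L) : Prop :=
  Fle f h /\ Fle g h /\ (forall k, Fle f k -> Fle g k -> Fle h k).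

Definition is_pinfty (f : Fbar L) : Prop :=
  (forall r, ceq (fup f r) (@cone L)) /\ (forall s, ceq (fdn f s) (@czero L)).

End FbarOps.

(* Two sublocales S and T meet in 0 in
   coS(L) iff every x is a meet s /\ t with s in S and t in T; this turns
   pseudocomplements and the distributivity of coS(L) into statements about
   elements.  Let D = \/_s f(---,s).
   (2) <-> (3): D* <= f(---,r+1)* <= f(r,---) for every r, and by (r1)
   (/\_r f(r,---)) /\ D = \/_s ((/\_r f(r,---)) /\ f(---,s)) = 0.
   (1) -> (2): the function that is +oo on D** and -oo on D* joins f to +oo,
   since an upper bound k of both has k(---,s) <= D /\ D* = 0; so D* = 0.
   (2) -> (1): if f \/ g = +oo, the upper bound of f and g with
   (r,---) |-> \/_{u>r} (f(u,---) \/ g(u,---))** is +oo, so its values at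
   every (r,---) are dense.  As g(---,s) /\ f(---,v) meets f(u,---) \/ g(u,---) in 0 for
   u >= s, v, it is 0; hence g(---,s) /\ D = 0, and (2) gives g(---,s) = 0. *)

From mathcomp Require Import all_boot all_order all_algebra.
Import Order.TTheory GRing.Theory Num.Theory.

Set Implicit Arguments.
Unset Strict Implicit.
Unset Printing Implicit Defensive.

Section FrameTheory.
Variable L : frame.
Implicit Types x y z a b : L.

Lemma fle_top x : fle x (ftop L).
Proof. exact: fsup_ub. Qed.

Lemma finf_lb (A : L -> Prop) a : A a -> fle (finf A) a.
Proof. by move=> Aa; apply: fsup_least => z; apply. Qed.

Lemma finf_glb (A : L -> Prop) z : (forall a, A a -> fle z a) -> fle z (finf A).
Proof. exact: fsup_ub. Qed.

Lemma fle_ext a b : (forall z, fle z a <-> fle z b) -> a = b.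
Proof. by move=> H; apply: fle_antisym; [apply/H|apply/H]; apply: fle_refl. Qed.

Lemma fle_meetP z a b : fle z (fmeet a b) <-> fle z a /\ fle z b.
Proof.
split=> [H|[]]; last exact: fmeet_glb.
by split; apply: fle_trans H _; [apply: fmeet_l|apply: fmeet_r].
Qed.

Lemma fmeetC a b : fmeet a b = fmeet b a.
Proof.
by apply: fle_antisym; apply: fmeet_glb;
  [apply: fmeet_r|apply: fmeet_l|apply: fmeet_r|apply: fmeet_l].
Qed.

Lemma fmeet_topl a : fmeet (ftop L) a = a.
Proof.
apply: fle_antisym; first exact: fmeet_r.
by apply: fmeet_glb; [apply: fle_top|apply: fle_refl].
Qed.

Lemma fimpP z a b : fle z (fimp a b) <-> fle (fmeet z a) b.
Proof.
split=> [H|H]; last exact: (@fsup_ub L (fun w => fle (fmeet w a) b)).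
apply: fle_trans (_ : fle (fmeet (fimp a b) a) b).
  by apply: fmeet_glb; [apply: fle_trans (fmeet_l _ _) H|apply: fmeet_r].
rewrite fmeetC /fimp fmeet_distr; apply: fsup_least => _ [w [Hw ->]].
by rewrite fmeetC.
Qed.

Lemma fimp_meet z a b : fimp z (fmeet a b) = fmeet (fimp z a) (fimp z b).
Proof.
apply: fle_ext => y; split=> [/fimpP/fle_meetP[]|/fle_meetP[]] => H1 H2.
  by apply/fle_meetP; split; apply/fimpP.
by apply/fimpP/fle_meetP; split; apply/fimpP.
Qed.

End FrameTheory.

Section Sublocales.
Variable L : frame.
Implicit Types (S T U : L -> Prop) (x y s t : L).

Lemma sublocale_top S : is_sublocale S -> S (ftop L).
Proof.
case=> Sinf _; have <- : finf (fun _ : L => False) = ftop L.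
  by apply: fle_antisym; [apply: fle_top|apply: finf_glb].
exact: Sinf.
Qed.

Lemma sublocale_meet S s t : is_sublocale S -> S s -> S t -> S (fmeet s t).
Proof.
case=> Sinf _ Ss St; have -> : fmeet s t = finf (fun a => a = s \/ a = t).
  apply: fle_antisym; last by apply: fmeet_glb; apply: finf_lb; [left|right].
  by apply: finf_glb => a [->|->]; [apply: fmeet_l|apply: fmeet_r].
by apply: Sinf => a [->|->].
Qed.

Lemma cone_sublocale : is_sublocale (@cone L).
Proof.
split=> [A HA|x s ->]; apply: fle_antisym; try exact: fle_top.
  by apply: finf_glb => a /HA ->; apply: fle_refl.
by apply/fimpP; apply: fmeet_l.
Qed.

Lemma cJoin_sublocale I (T : I -> L -> Prop) :
  (forall i, is_sublocale (T i)) -> is_sublocale (cJoin T).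
Proof.
move=> subT; split=> [A HA i|x s Hs i]; first by apply: (subT i).1 => a /HA.
exact: (subT i).2.
Qed.

Lemma cMeet_sublocale I (T : I -> L -> Prop) : is_sublocale (cMeet T).
Proof.
split=> [A HA U subU TU|x s Hs U subU TU]; first by apply: subU.1 => a /HA; apply.
exact: subU.2 _ _ (Hs U subU TU).
Qed.

Lemma cMeet_ge I (T : I -> L -> Prop) i x : T i x -> cMeet T x.
Proof. by move=> Tx U _ TU; apply: TU Tx. Qed.

Lemma cpc_sublocale S : is_sublocale (cpc S).
Proof.
split=> [A HA T subT ST|x s Hs T subT ST]; first by apply: subT.1 => a /HA; apply.
exact: subT.2 _ _ (Hs T subT ST).
Qed.

Lemma cJoin_const I S : I -> ceq S (cJoin (fun _ : I => S)).
Proof. by move=> i x; split=> [Sx _|/(_ i)]. Qed.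

Definition hull S x := finf (fun s => S s /\ fle x s).
Definition residual S x := fimp (hull S x) x.

Lemma hull_in S x : is_sublocale S -> S (hull S x).
Proof. by case=> Sinf _; apply: Sinf => a []. Qed.

Lemma hull_ge S x : fle x (hull S x).
Proof. by apply: finf_glb => a []. Qed.

Lemma hull_le S x s : S s -> fle x s -> fle (hull S x) s.
Proof. by move=> Ss xs; apply: finf_lb. Qed.

Lemma meet_hull_residual S x : fmeet (hull S x) (residual S x) = x.
Proof.
apply: fle_antisym; first by rewrite fmeetC; apply/fimpP; apply: fle_refl.
by apply: fmeet_glb; [apply: hull_ge|apply/fimpP; apply: fmeet_l].
Qed.

Lemma residual_top S s : S s -> residual S s = ftop L.
Proof.
move=> Ss; apply: fle_antisym; first exact: fle_top.
by apply/fimpP; apply: fle_trans (fmeet_r _ _) (hull_le Ss (fle_refl s)).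
Qed.

(* [hull S (s /\ t) <= s], so the residual of [s /\ t] is [hull S (s /\ t) -> t]. *)
Lemma residual_meet S T s t :
  is_sublocale T -> S s -> T t -> T (residual S (fmeet s t)).
Proof.
move=> subT Ss Tt; have -> : residual S (fmeet s t) = fimp (hull S (fmeet s t)) t.
  apply: fle_ext => z; split=> /fimpP H; apply/fimpP.
    exact: fle_trans H (fmeet_r _ _).
  apply: fmeet_glb => //; apply: fle_trans (fmeet_r _ _) _.
  exact: hull_le Ss (fmeet_l _ _).
exact: subT.2.
Qed.

(* [S /\ T = 0] in coS(L), see [cmeet2_eq0P]. *)
Definition cdisjoint S T := forall x, exists s t, [/\ S s, T t & x = fmeet s t].

Lemma cdisjointP S T : is_sublocale S -> is_sublocale T ->
  cdisjoint S T <-> forall x, T (residual S x).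
Proof.
move=> subS subT; split=> [ST x|ST x].
  by have [s [t [Ss Tt ->]]] := ST x; apply: residual_meet.
exists (hull S x), (residual S x).
by rewrite meet_hull_residual; split=> //; apply: hull_in.
Qed.

Lemma residual_sublocale S T : is_sublocale S -> is_sublocale T ->
  is_sublocale (fun x => T (residual S x)).
Proof.
move=> subS subT; split=> [A HA|z y Ty].
  pose s := finf (fun a => exists2 x, A x & a = hull S x).
  pose t := finf (fun a => exists2 x, A x & a = residual S x).
  have -> : finf A = fmeet s t.
    apply: fle_antisym.
      apply: fmeet_glb; apply: finf_glb => _ [a Aa ->].
        exact: fle_trans (finf_lb Aa) (hull_ge _ _).
      by apply/fimpP; apply: fle_trans (fmeet_l _ _) (finf_lb Aa).
    apply: finf_glb => a Aa; rewrite -(meet_hull_residual S a).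
    apply: fmeet_glb; [apply: fle_trans (fmeet_l _ _) _|apply: fle_trans (fmeet_r _ _) _];
      by apply: finf_lb; exists a.
  apply: residual_meet => //.
    by apply: subS.1 => _ [a _ ->]; apply: hull_in.
  by apply: subT.1 => _ [a /HA Ta ->].
have -> : fimp z y = fmeet (fimp z (hull S y)) (fimp z (residual S y)).
  by rewrite -fimp_meet meet_hull_residual.
apply: residual_meet => //; [exact: subS.2 _ _ (hull_in _ subS)|exact: subT.2].
Qed.

Lemma cmeet2_eq0P S T : is_sublocale S -> is_sublocale T ->
  ceq (cmeet2 S T) (@czero L) <-> cdisjoint S T.
Proof.
move=> subS subT; split=> [ST|ST x]; last first.
  split=> // _ U subU STU; have [s [t [Ss Tt ->]]] := ST x.
  by apply: sublocale_meet; [|apply: (STU true)|apply: (STU false)].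
(* [{x | T (residual S x)}] is a sublocale containing both [S] and [T]. *)
apply/cdisjointP => // x; have /ST STx : czero x by [].
apply: (STx (fun y => T (residual S y))); first exact: residual_sublocale.
case=> y /= Hy; last exact: subT.2.
by rewrite residual_top //; apply: sublocale_top.
Qed.

Lemma cdisjointC S T : cdisjoint S T -> cdisjoint T S.
Proof. by move=> ST x; have [s [t [Ss Tt ->]]] := ST x; exists t, s; rewrite fmeetC. Qed.

Lemma cdisjointS S S' T T' : (forall x, S x -> S' x) -> (forall x, T x -> T' x) ->
  cdisjoint S T -> cdisjoint S' T'.
Proof.
by move=> SS' TT' ST x; have [s [t [Ss Tt ->]]] := ST x; exists s, t; split; auto.
Qed.

Lemma cdisjoint_cJoin I S (T : I -> L -> Prop) :
  is_sublocale S -> (forall i, is_sublocale (T i)) ->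
  (forall i, cdisjoint S (T i)) -> cdisjoint S (cJoin T).
Proof.
move=> subS subT ST; apply/cdisjointP => // [|x i]; first exact: cJoin_sublocale.
exact: (cdisjointP subS (subT i)).1 (ST i) x.
Qed.

Lemma cdisjoint_full S T U : is_sublocale U -> (forall x, S x -> U x) ->
  (forall x, T x -> U x) -> cdisjoint S T -> forall x, U x.
Proof.
move=> subU SU TU ST x; have [s [t [Ss Tt ->]]] := ST x.
by apply: sublocale_meet; [|apply: SU|apply: TU].
Qed.

Lemma cdisjoint_cpc S : is_sublocale S -> cdisjoint S (cpc S).
Proof.
move=> subS; apply/cdisjointP => // [|x T subT ST]; first exact: cpc_sublocale.
by apply: (cdisjointP subS subT).1; apply/(cmeet2_eq0P subS subT).
Qed.

Lemma cpc_subP S T : is_sublocale S -> is_sublocale T ->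
  cdisjoint S T <-> forall x, cpc S x -> T x.
Proof.
move=> subS subT; split=> [ST x Sx|].
  by apply: (Sx _ subT); apply/(cmeet2_eq0P subS subT).
by move=> ST; apply: (cdisjointS (fun _ => id) ST (cdisjoint_cpc subS)).
Qed.

Lemma cpc_anti S T : (forall x, S x -> T x) -> forall x, cpc T x -> cpc S x.
Proof.
move=> ST x Tx U subU SU; apply: (Tx U subU) => y; split=> // _ V subV TUV.
have SUy : cmeet2 S U y by apply/SU.
by apply: (SUy V subV); case=> z /= Hz; [apply: (TUV true); apply: ST|apply: (TUV false)].
Qed.

Lemma cpcc_sub S : is_sublocale S -> forall x, cpc (cpc S) x -> S x.
Proof.
move=> subS; apply/cpc_subP => //; first exact: cpc_sublocale.
exact/cdisjointC/cdisjoint_cpc.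
Qed.

Lemma cpc_sub_cpc3 S : is_sublocale S -> forall x, cpc S x -> cpc (cpc (cpc S)) x.
Proof. by move=> subS; apply: cpc_anti; apply: cpcc_sub. Qed.

Lemma cdisjoint_cpcc S T : is_sublocale S -> is_sublocale T ->
  cdisjoint S T -> cdisjoint (cpc (cpc S)) T.
Proof.
move=> subS subT /(cpc_subP subS subT) ST.
apply/cpc_subP => // [|x Sx]; first exact: cpc_sublocale.
exact: ST _ (cpcc_sub (cpc_sublocale S) Sx).
Qed.

Lemma cpc_full_cdisjoint S T : is_sublocale S -> is_sublocale T ->
  (forall x, cpc S x) -> cdisjoint S T -> forall x, T x.
Proof. by move=> subS subT cpcS /(cpc_subP subS subT) ST x; apply: ST. Qed.

Lemma cpc_full_cone S : (forall x, S x) -> forall x, cpc S x -> cone x.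
Proof.
move=> fullS x; apply; first exact: cone_sublocale.
apply/cmeet2_eq0P; [by split=> *; apply: fullS|exact: cone_sublocale|].
by move=> y; exists y, (ftop L); split=> //; rewrite fmeetC fmeet_topl.
Qed.

Lemma cpc_cone x : cpc (@cone L) x.
Proof.
move=> T subT /(cmeet2_eq0P cone_sublocale subT) coneT.
by have [_ [t [-> Tt ->]]] := coneT x; rewrite fmeet_topl.
Qed.

End Sublocales.

Lemma ltr_add1 (R : numDomainType) (r : R) : (r < r + 1)%R.
Proof. by rewrite ltrDl ltr01. Qed.

Section FbarTheory.
Variable L : frame.
Implicit Types (f g h k p : Fbar L) (D : L -> Prop).

Lemma fup_anti h t u : (t < u)%R -> forall x, fup h t x -> fup h u x.
Proof. by move=> tu x /(fr3 h t x)/(_ (exist _ u tu)). Qed.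

Lemma cdisjoint_fup_fdn h r s : (s <= r)%R -> cdisjoint (fup h r) (fdn h s).
Proof. by move=> sr; apply/(cmeet2_eq0P (fup_sub h r) (fdn_sub h s))/fr1. Qed.

Lemma is_pinftyP k : is_pinfty k <-> forall s x, fdn k s x.
Proof.
split=> [[_ dn] s x|dn]; first exact/(dn s x).
split=> [r x|s x] //; split=> [kx|->]; last exact: sublocale_top (fup_sub k r).
exact: (cpc_full_cone (dn (r + 1)%R) (fpc2 (ltr_add1 r) kx)).
Qed.

Lemma Fle_pinfty k p : is_pinfty p -> Fle k p.
Proof.
case=> up dn; split=> [r x /(up r x) ->|s x _]; last exact/(dn s x).
exact: sublocale_top (fup_sub k r).
Qed.

Lemma Fis_join_pinfty f g p : is_pinfty p ->
  (forall k, Fle f k -> Fle g k -> is_pinfty k) -> Fis_join f g p.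
Proof.
move=> pinf ub; split; first exact: Fle_pinfty.
by split=> [|k fk gk]; apply: Fle_pinfty => //; apply: ub.
Qed.

(* The function that is [+oo] on [D**] and [-oo] on [D*]. *)
Definition Fbar_pc D (subD : is_sublocale D) : Fbar L.
Proof.
apply: (@MkFbar L (fun _ => cpc (cpc D)) (fun _ => cpc D))
  => [r|s|r s _|r|s|r s _|r s _ x //].
- exact: cpc_sublocale.
- exact: cpc_sublocale.
- apply/cmeet2_eq0P; try exact: cpc_sublocale.
  exact/cdisjointC/cdisjoint_cpc/cpc_sublocale.
- exact/cJoin_const/(exist _ (r + 1)%R (ltr_add1 r)).
- by apply/cJoin_const/(exist _ (s - 1)%R); rewrite ltrBlDr ltr_add1.
- exact: cpc_sub_cpc3.
Defined.

Lemma Fbar_pc_pinfty D (subD : is_sublocale D) :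
  (forall x, cpc D x) -> is_pinfty (Fbar_pc subD).
Proof. by move=> cpcD; apply/is_pinftyP. Qed.

Definition fdn_sup f := cJoin (fun s : rat => fdn f s).
Definition fup_inf f := cMeet (fun r : rat => fup f r).
Definition pinfty_join_cancel f :=
  forall g h, Fis_join f g h -> is_pinfty h -> is_pinfty g.

Lemma fdn_sup_sublocale f : is_sublocale (fdn_sup f).
Proof. by apply: cJoin_sublocale => s; apply: fdn_sub. Qed.

Lemma fup_inf_cpc_fdn_sup f :
  ceq (fup_inf f) (@czero L) -> ceq (cpc (fdn_sup f)) (@czero L).
Proof.
move=> full x; split=> // _; have /full fx : czero x by [].
apply: fx => [|r y fy]; first exact: cpc_sublocale.
by apply: cpc_anti (fpc2 (ltr_add1 r) fy) => z; apply.
Qed.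

Lemma cpc_fdn_sup_fup_inf f :
  ceq (cpc (fdn_sup f)) (@czero L) -> ceq (fup_inf f) (@czero L).
Proof.
move=> dense x; split=> // _.
apply: (cpc_full_cdisjoint (fdn_sup_sublocale f) (cMeet_sublocale _)) => [y|].
  exact/dense.
apply: cdisjointC; apply: cdisjoint_cJoin => [|s|s]; try exact: cMeet_sublocale.
  exact: fdn_sub.
by apply: cdisjointS (cdisjoint_fup_fdn f (lexx s)) => // y; apply: cMeet_ge.
Qed.

Lemma Fis_join_Fbar_pc_fdn_sup f p : is_pinfty p ->
  Fis_join f (Fbar_pc (fdn_sup_sublocale f)) p.
Proof.
move=> pinf; apply: Fis_join_pinfty => // k [_ fk] [_ gk]; apply/is_pinftyP => s.
apply: cdisjoint_full (fdn_sub k s) (fk s) (gk s) _.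
by apply: cdisjointS (cdisjoint_cpc (fdn_sup_sublocale f)) => // y; apply.
Qed.

Lemma pinfty_join_cancel_cpc_fdn_sup f :
  pinfty_join_cancel f -> ceq (cpc (fdn_sup f)) (@czero L).
Proof.
move=> cancel; have pinf := Fbar_pc_pinfty (@cone_sublocale L) (@cpc_cone L).
have /is_pinftyP dn := cancel _ _ (Fis_join_Fbar_pc_fdn_sup f pinf) pinf.
by move=> x; split=> // _; apply: (dn 0%R).
Qed.

End FbarTheory.

Section Fmax.
Variable L : frame.
Variables f g : Fbar L.

Definition fup_max (u : rat) : L -> Prop :=
  cJoin (fun b : bool => if b then fup f u else fup g u).

(* An upper bound of [f] and [g]: their pointwise maximum, regularised by [**]
   so that (pc2) holds. *)
Definition Fmax_up (r : rat) : L -> Prop :=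
  cJoin (fun u : {u : rat | (r < u)%R} => cpc (cpc (fup_max (sval u)))).
Definition Fmax_dn (s : rat) : L -> Prop :=
  cJoin (fun t : {t : rat | (t < s)%R} => cpc (Fmax_up (sval t))).

Lemma fup_max_sublocale u : is_sublocale (fup_max u).
Proof. by apply: cJoin_sublocale => -[]; apply: fup_sub. Qed.

Lemma Fmax_up_sublocale r : is_sublocale (Fmax_up r).
Proof. by apply: cJoin_sublocale => u; apply: cpc_sublocale. Qed.

Lemma Fmax_dn_sublocale s : is_sublocale (Fmax_dn s).
Proof. by apply: cJoin_sublocale => t; apply: cpc_sublocale. Qed.

Lemma fup_max_anti t u : (t < u)%R -> forall x, fup_max t x -> fup_max u x.
Proof. by move=> tu x tx b; case: b (tx b) => /=; apply: fup_anti. Qed.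

Lemma Fmax_up_anti t r : (t <= r)%R -> forall x, Fmax_up t x -> Fmax_up r x.
Proof. by move=> tr x tx [u ru]; apply: (tx (exist _ u (le_lt_trans tr ru))). Qed.

Lemma cpcc_fup_max_sub_Fmax_up t x : cpc (cpc (fup_max t)) x -> Fmax_up t x.
Proof.
move=> tx [u tu]; apply: (cpc_anti _ tx); apply: cpc_anti.
exact: fup_max_anti.
Qed.

Definition Fmax : Fbar L.
Proof.
apply: (@MkFbar L Fmax_up Fmax_dn Fmax_up_sublocale Fmax_dn_sublocale)
  => [r s sr|r x|s x|r s rs x rx|r s rs x rx].
- apply/cmeet2_eq0P; try exact: Fmax_up_sublocale; try exact: Fmax_dn_sublocale.
  apply: cdisjoint_cJoin => [|t|[t ts]]; try exact: Fmax_up_sublocale.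
    exact: cpc_sublocale.
  apply: cdisjointS (cdisjoint_cpc (Fmax_up_sublocale t)) => //.
  exact: Fmax_up_anti (ltW (lt_le_trans ts sr)).
- split=> [rx [s rs] [u su]|rx [u ru]]; first exact: (rx (exist _ u (lt_trans rs su))).
  have [rm mu] := midf_lt ru.
  exact: (rx (exist (fun m => (r < m)%R) _ rm) (exist _ u mu)).
- split=> [sx [r rs] [t tr]|sx [t ts]]; first exact: (sx (exist _ t (lt_trans tr rs))).
  have [tm ms] := midf_lt ts.
  exact: (sx (exist (fun m => (m < s)%R) _ ms) (exist _ t tm)).
- exact: (rx (exist _ r rs)).
- (* for r < m < s, in coS(L):
     (Fmax_dn s)* <= (Fmax_up m)** <= (fup_max m)**** = (fup_max m)** <= Fmax_up r *)
  have [rm ms] := midf_lt rs.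
  have mx := cpc_sub_cpc3 (cpc_sublocale _) (rx (exist (fun m => (r < m)%R) _ rm)).
  have my : cpc (cpc (Fmax_up ((r + s) / 2))) x.
    exact: (cpc_anti (cpc_anti (@cpcc_fup_max_sub_Fmax_up _)) mx).
  apply: (cpc_anti _ my) => y sy.
  exact: (sy (exist (fun m => (m < s)%R) _ ms)).
Defined.

Lemma Fle_Fmax h : (forall u x, fup_max u x -> fup h u x) -> Fle h Fmax.
Proof.
move=> maxh; have uph r x : Fmax_up r x -> fup h r x.
  move=> rx; apply/(fr3 h r x) => -[u ru] /=; apply: maxh.
  exact: (cpcc_sub (fup_max_sublocale u) (rx (exist _ u ru))).
split=> [r x /uph //|s x sx [t ts] /=].
exact: (cpc_anti (uph t) (fpc1 ts sx)).
Qed.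

Lemma cdisjoint_Fmax_up r s t C : (r <= t)%R -> (s <= t)%R -> is_sublocale C ->
  (forall x, fdn f r x -> C x) -> (forall x, fdn g s x -> C x) ->
  cdisjoint (Fmax_up t) C.
Proof.
move=> rt st subC fC gC; apply: cdisjointC.
apply: cdisjoint_cJoin => // [u|[u tu]]; first exact: cpc_sublocale.
apply/cdisjointC/cdisjoint_cpcc => //; first exact: fup_max_sublocale.
apply: cdisjointC; apply: cdisjoint_cJoin => // -[]; try exact: fup_sub.
  have ru := ltW (le_lt_trans rt tu).
  exact: (cdisjointS fC (fun _ => id) (cdisjointC (cdisjoint_fup_fdn f ru))).
have su := ltW (le_lt_trans st tu).
exact: (cdisjointS gC (fun _ => id) (cdisjointC (cdisjoint_fup_fdn g su))).
Qed.

Lemma Fmax_dn_full_fdn : (forall s x, Fmax_dn s x) ->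
  (forall x, cpc (fdn_sup f) x) -> forall s x, fdn g s x.
Proof.
move=> full dense s.
apply: (cpc_full_cdisjoint (fdn_sup_sublocale f) (fdn_sub g s) dense).
apply: cdisjointC; apply: cdisjoint_cJoin => [|v|v]; try exact: fdn_sub.
apply/(cmeet2_eq0P (fdn_sub g s) (fdn_sub f v)) => x; split=> // _.
pose t := Num.max v s.
have cpc_up y : cpc (Fmax_up t) y.
  exact: (full (t + 1)%R y (exist _ t (ltr_add1 t))).
apply: (cpc_full_cdisjoint (Fmax_up_sublocale t) (cMeet_sublocale _) cpc_up).
apply: (@cdisjoint_Fmax_up v s) => [|||y|y].
- by rewrite le_max lexx.
- by rewrite le_max lexx orbT.
- exact: cMeet_sublocale.
- exact: (@cMeet_ge _ _ _ false).
- exact: (@cMeet_ge _ _ _ true).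
Qed.

End Fmax.

Lemma cpc_fdn_sup_pinfty_join_cancel (L : frame) (f : Fbar L) :
  ceq (cpc (fdn_sup f)) (@czero L) -> pinfty_join_cancel f.
Proof.
move=> dense g h [_ [_ least]] /is_pinftyP hdn.
have [_ hmax] := least (Fmax f g) (Fle_Fmax (fun u x fx => fx true))
  (Fle_Fmax (fun u x gx => gx false)).
apply/is_pinftyP/(Fmax_dn_full_fdn (f := f)) => [s x|x].
  exact: (hmax s x (hdn s x)).
exact/dense.
Qed.

Theorem proposition5p3 (L : frame) (f : Fbar L) :
  ((forall g h : Fbar L, Fis_join f g h -> is_pinfty h -> is_pinfty g) <->
   ceq (cpc (cJoin (fun s : rat => fdn f s))) (@czero L)) /\
  (ceq (cpc (cJoin (fun s : rat => fdn f s))) (@czero L) <->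
   ceq (cMeet (fun r : rat => fup f r)) (@czero L)).
Proof.
split; split.
- exact: pinfty_join_cancel_cpc_fdn_sup.
- exact: cpc_fdn_sup_pinfty_join_cancel.
- exact: cpc_fdn_sup_fup_inf.
- exact: fup_inf_cpc_fdn_sup.
Qed.
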